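(* Let $\Pi\in\boldsymbol{\Pi}_{q,r}$ and $W\in\mathbb{R}^{q\times p}$ with $W$ of full column rank, and assume $\mathcal{Z}_r^+(\Pi)\neq\emptyset$. Define $\Pi_W:=\begin{bmatrix}W^\top\Pi_{11}W&W^\top\Pi_{12}\\ \Pi_{21}W&\Pi_{22}\end{bmatrix}\in\mathbb{S}^{p+r}$. Then $\mathcal{Z}_r^+(\Pi)W=\mathcal{Z}_r^+(\Pi_W)$.
   Context: $\mathbb{S}^k$ denotes the real symmetric $k\times k$ matrices; for symmetric matrices, $A\ge 0$ ($A>0$) means positive semidefinite (definite). $A^\dagger$ is the Moore–Penrose pseudo-inverse. Any $\Pi\in\mathbb{S}^{q+r}$ is partitioned as $\Pi=\begin{bmatrix}\Pi_{11}&\Pi_{12}\\ \Pi_{21}&\Pi_{22}\end{bmatrix}$ with $\Pi_{11}\in\mathbb{S}^q$, $\Pi_{22}\in\mathbb{S}^r$. The generalized Schur complement is $\Pi\mid\Pi_{22}:=\Pi_{11}-\Pi_{12}\Pi_{22}^\dagger\Pi_{21}$. The set $\boldsymbol{\Pi}_{q,r}$ consists of all $\Pi\in\mathbb{S}^{q+r}$ with $\Pi_{22}\le 0$, $\Pi\mid\Pi_{22}\ge 0$ and $\ker\Pi_{22}\subseteq\ker\Pi_{12}$. Define $\mathcal{Z}_r^+(\Pi)=\{Z\in\mathbb{R}^{r\times q}:\begin{bmatrix}I_q\\ Z\end{bmatrix}^\top\Pi\begin{bmatrix}I_q\\ Z\end{bmatrix}> 0\}$ (analogously $\mathcal{Z}_r^+(\Pi_W)\subseteq\mathbb{R}^{r\times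 p}$ using $I_p$). For $\mathcal{S}\subseteq\mathbb{R}^{r\times q}$, $\mathcal{S}W:=\{SW:S\in\mathcal{S}\}$. *)

From HB Require Import structures.
From mathcomp Require Import all_boot all_order all_algebra.
From mathcomp Require Import reals.
Set Implicit Arguments. Unset Strict Implicit. Unset Printing Implicit Defensive.
Import Order.TTheory GRing.Theory Num.Theory.
Local Open Scope ring_scope.

Section Defs.
Variable R : realType.

Definition symmetric n (A : 'M[R]_n) : Prop := A^T = A.

Definition psd n (A : 'M[R]_n) : Prop :=
  symmetric A /\ forall v : 'cV[R]_n, 0 <= (v^T *m A *m v) 0 0.

Definition nsd n (A : 'M[R]_n) : Prop :=
  symmetric A /\ forall v : 'cV[R]_n, (v^T *m A *m v) 0 0 <= 0.

Definition pd n (A : 'M[R]_n) : Prop :=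
  symmetric A /\ forall v : 'cV[R]_n, v != 0 -> 0 < (v^T *m A *m v) 0 0.

(* X is the Moore-Penrose pseudo-inverse of A (the four Penrose equations;
   such an X exists and is unique). *)
Definition is_pinv m n (A : 'M[R]_(m, n)) (X : 'M[R]_(n, m)) : Prop :=
  [/\ A *m X *m A = A, X *m A *m X = X,
      (A *m X)^T = A *m X & (X *m A)^T = X *m A].

Definition P11 q r (P : 'M[R]_(q + r)) : 'M[R]_q := ulsubmx P.
Definition P12 q r (P : 'M[R]_(q + r)) : 'M[R]_(q, r) := ursubmx P.
Definition P21 q r (P : 'M[R]_(q + r)) : 'M[R]_(r, q) := dlsubmx P.
Definition P22 q r (P : 'M[R]_(q + r)) : 'M[R]_r := drsubmx P.

Definition gschur q r (P : 'M[R]_(q + r)) (X : 'M[R]_r) : 'M[R]_q :=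
  P11 P - P12 P *m X *m P21 P.

Definition PiSet q r (P : 'M[R]_(q + r)) : Prop :=
  [/\ symmetric P,
      nsd (P22 P),
      (forall X, is_pinv (P22 P) X -> psd (gschur P X))
    & (forall v : 'cV[R]_r, P22 P *m v = 0 -> P12 P *m v = 0)].

Definition Zplus q r (P : 'M[R]_(q + r)) (Z : 'M[R]_(r, q)) : Prop :=
  pd ((col_mx 1%:M Z)^T *m P *m col_mx 1%:M Z).
End Defs.

Definition PiW (R : realType) q r p (P : 'M[R]_(q + r)) (W : 'M[R]_(q, p))
  : 'M[R]_(p + r) :=
  block_mx (W^T *m P11 P *m W) (W^T *m P12 P) (P21 P *m W) (P22 P).

From Pilot Require Import Defs.
From HB Require Import structures.
From mathcomp Require Import all_boot all_order all_algebra.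
From mathcomp Require Import reals lra.
Import Order.TTheory GRing.Theory Num.Theory.
Local Open Scope ring_scope.

(** Since ker Pi22 is contained in ker Pi12, Pi12 = -K^T Pi22 for some K, and
    completing the square gives
      [X; Y]^T Pi [X; Y] = X^T S X + (Y - K X)^T Pi22 (Y - K X)
    with S positive definite (Pi22 <= 0 and Z+(Pi) is nonempty).  Thus Z is in
    Z+(Pi) iff S + (Z - K)^T Pi22 (Z - K) > 0, and Z' is in Z+(Pi_W) iff
    W^T S W + (Z' - K W)^T Pi22 (Z' - K W) > 0.  Congruence by the injective W
    maps the first set into the second; conversely Z' - K W = D factors as
    D = E W with S + E^T Pi22 E > 0, by taking E := D A for the S-orthogonal
    left inverse A of W. *)

Set Implicit Arguments. Unset Strict Implicit. Unset Printing Implicit Defensive.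

Section QuadraticForms.
Variable R : realType.

Definition qform n (A : 'M[R]_n) (v : 'cV[R]_n) : R := (v^T *m A *m v) 0 0.

Lemma qform_congr n k (A : 'M[R]_n) (B : 'M[R]_(n, k)) v :
  qform (B^T *m A *m B) v = qform A (B *m v).
Proof. by rewrite /qform trmx_mul !mulmxA. Qed.

Lemma qformD n (A B : 'M[R]_n) v : qform (A + B) v = qform A v + qform B v.
Proof. by rewrite /qform mulmxDr mulmxDl mxE. Qed.

Lemma qform0 n (A : 'M[R]_n) : qform A 0 = 0.
Proof. by rewrite /qform trmx0 !mul0mx mxE. Qed.

Lemma qform_orthD n (S : 'M[R]_n) a b :
  Defs.symmetric S -> a^T *m S *m b = 0 -> qform S (a + b) = qform S a + qform S b.
Proof.
move=> sS ab0; rewrite /qform [(a + b)^T]linearD /= !mulmxDl !mulmxDr ab0.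
have -> : b^T *m S *m a = (a^T *m S *m b)^T by rewrite !trmx_mul trmxK sS mulmxA.
by rewrite ab0 trmx0 addr0 add0r mxE.
Qed.

Lemma symmetric_congr n k (A : 'M[R]_n) (B : 'M[R]_(n, k)) :
  Defs.symmetric A -> Defs.symmetric (B^T *m A *m B).
Proof. by move=> sA; rewrite /Defs.symmetric !trmx_mul trmxK sA mulmxA. Qed.

Lemma symmetricD n (A B : 'M[R]_n) :
  Defs.symmetric A -> Defs.symmetric B -> Defs.symmetric (A + B).
Proof. by move=> sA sB; rewrite /Defs.symmetric linearD /= sA sB. Qed.

Lemma nsd_congr n k (N : 'M[R]_n) (B : 'M[R]_(n, k)) :
  nsd N -> nsd (B^T *m N *m B).
Proof.
case=> sN nN; split=> [|v]; first exact: symmetric_congr.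
by rewrite -/(qform _ v) qform_congr; apply: nN.
Qed.

Lemma pd_congr n k (A : 'M[R]_n) (B : 'M[R]_(n, k)) :
  pd A -> (forall u : 'cV_k, B *m u = 0 -> u = 0) -> pd (B^T *m A *m B).
Proof.
case=> sA pA injB; split=> [|u u0]; first exact: symmetric_congr.
rewrite -/(qform _ u) qform_congr; apply: pA.
by apply: contra u0 => /eqP/injB ->.
Qed.

Lemma pd_ge0 n (A : 'M[R]_n) v : pd A -> 0 <= qform A v.
Proof.
case=> _ pA; have [->|v0] := eqVneq v 0; first by rewrite qform0.
exact/ltW/pA.
Qed.

Lemma pd_nsdD n (A B : 'M[R]_n) : nsd B -> pd (A + B) -> pd A.
Proof.
case=> sB nB [sAB pAB]; split=> [|v v0].
  by apply: (addIr B); rewrite -{1}sB -sAB [(A + B)^T]linearD.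
have hAB : 0 < qform (A + B) v := pAB v v0.
have hB : qform B v <= 0 := nB v.
change (0 < qform A v); move: hAB; rewrite qformD; lra.
Qed.

Lemma pd_unitmx n (A : 'M[R]_n) : pd A -> A \in unitmx.
Proof.
case=> _ pA; rewrite unitmxE unitfE; apply/det0P => -[v v0 vA].
have := pA v^T; rewrite trmx_eq0 => /(_ v0).
by rewrite trmxK vA mul0mx mxE ltxx.
Qed.

(* A := (W^T S W)^-1 W^T S is a left inverse of W, and v - W A v is
   S-orthogonal to the range of W. *)
Lemma pd_nsd_extend n p r (S : 'M[R]_n) (N : 'M[R]_r) (W : 'M[R]_(n, p))
    (D : 'M[R]_(r, p)) :
  pd S -> nsd N -> pd (W^T *m S *m W + D^T *m N *m D) ->
  exists2 E : 'M[R]_(r, n), E *m W = D & pd (S + E^T *m N *m E).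
Proof.
move=> pdS nN pdWD; have [sS pS] := pdS.
set T := W^T *m S *m W in pdWD.
have unitT : T \in unitmx by apply/pd_unitmx/(pd_nsdD (nsd_congr D nN)).
pose A := invmx T *m W^T *m S.
have AW : A *m W = 1%:M by rewrite /A -!mulmxA (mulmxA W^T) mulVmx.
exists (D *m A); first by rewrite -mulmxA AW mulmx1.
split=> [|v v0]; first by apply: symmetricD => //; apply: symmetric_congr; case: nN.
change (0 < qform (S + (D *m A)^T *m N *m (D *m A)) v); set u := A *m v.
have orth : (W *m u)^T *m S *m (v - W *m u) = 0.
  have WSv : W^T *m (S *m v) = T *m u by rewrite /u /A !mulmxA mulmxV ?mul1mx.
  by rewrite mulmxBr trmx_mul -!mulmxA WSv /T !mulmxA subrr.
have -> : qform (S + (D *m A)^T *m N *m (D *m A)) v =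
    qform (T + D^T *m N *m D) u + qform S (v - W *m u).
  rewrite !qformD.
  have -> : qform ((D *m A)^T *m N *m (D *m A)) v = qform (D^T *m N *m D) u.
    by rewrite !qform_congr -mulmxA.
  rewrite -{1}(subrK (W *m u) v) [_ + W *m u]addrC qform_orthD //.
  rewrite -[qform S (W *m u)]qform_congr; lra.
have [u0|u0] := eqVneq u 0.
  by rewrite u0 qform0 mulmx0 subr0 add0r; apply: pS.
have := pdWD.2 u u0; have := pd_ge0 (v - W *m u) pdS.
rewrite -/(qform _ u); lra.
Qed.

End QuadraticForms.

Section BlockForms.
Variable R : realType.

Lemma quad_block_mx m n k (X : 'M[R]_(m, k)) (Y : 'M[R]_(n, k)) A B C D :
  (col_mx X Y)^T *m block_mx A B C D *m col_mx X Y =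
  X^T *m A *m X + X^T *m B *m Y + Y^T *m C *m X + Y^T *m D *m Y.
Proof. by rewrite tr_col_mx mul_row_block mul_row_col !mulmxDl addrACA !addrA. Qed.

Lemma quad_block_mx_square m n k (A : 'M[R]_m) (N : 'M[R]_n) (K : 'M[R]_(n, m))
    (X : 'M[R]_(m, k)) (Y : 'M[R]_(n, k)) :
  (col_mx X Y)^T *m block_mx A (- K^T *m N) (- N *m K) N *m col_mx X Y =
  X^T *m (A - K^T *m N *m K) *m X + (Y - K *m X)^T *m N *m (Y - K *m X).
Proof.
rewrite quad_block_mx [(Y - _)^T]linearB /= trmx_mul.
rewrite !mulmxBl !mulmxBr !mulNmx !mulmxN mulmxBl !mulNmx !mulmxA.
move: (X^T *m A *m X) (X^T *m K^T *m N *m Y) (Y^T *m N *m K *m X)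
  (Y^T *m N *m Y) (X^T *m K^T *m N *m K *m X) => a b c d e.
by apply/matrixP => i j; rewrite !mxE; lra.
Qed.

Lemma submx_of_ker m n k (B : 'M[R]_(m, n)) (N : 'M[R]_(k, n)) :
  (forall v : 'cV_n, N *m v = 0 -> B *m v = 0) -> (B <= N)%MS.
Proof.
move=> kerNB; rewrite submxE; apply/eqP/matrixP => i j.
have Ncol : N *m col j (cokermx N) = 0 by rewrite colE mulmxA mulmx_coker mul0mx.
have := congr1 (fun M : 'cV_m => M i 0) (kerNB _ Ncol).
by rewrite colE mulmxA -colE !mxE.
Qed.

Lemma full_col_rank_inj m n (W : 'M[R]_(m, n)) :
  \rank W = n -> forall u : 'cV_n, W *m u = 0 -> u = 0.
Proof.
move=> rW u Wu; have freeWT : row_free W^T by rewrite /row_free mxrank_tr rW.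
apply: trmx_inj; rewrite trmx0; apply: (row_free_inj freeWT).
by rewrite /= -trmx_mul Wu trmx0 mul0mx.
Qed.

Lemma PiW_quad q r p (P : 'M[R]_(q + r)) (W : 'M[R]_(q, p)) (Z' : 'M[R]_(r, p)) :
  (col_mx 1%:M Z')^T *m PiW P W *m col_mx 1%:M Z' =
  (col_mx W Z')^T *m P *m col_mx W Z'.
Proof.
rewrite -{2}(submxK P) !quad_block_mx trmx1 !mul1mx !mulmx1 !mulmxA.
by rewrite /P11 /P12 /P21 /P22.
Qed.

Section CompletingTheSquare.
Variables (q r : nat) (P : 'M[R]_(q + r)).
Hypotheses (sP : Defs.symmetric P)
  (kerP : forall v : 'cV_r, P22 P *m v = 0 -> P12 P *m v = 0).

Definition pi_shift : 'M[R]_(r, q) := - (P12 P *m pinvmx (P22 P))^T.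
Definition pi_rest : 'M[R]_q := P11 P - pi_shift^T *m P22 P *m pi_shift.

Lemma P12_shift : P12 P = - pi_shift^T *m P22 P.
Proof.
by rewrite /pi_shift linearN /= trmxK opprK mulmxKpV //; apply: submx_of_ker.
Qed.

Lemma P21_shift : P21 P = - P22 P *m pi_shift.
Proof.
have s22 : (P22 P)^T = P22 P by rewrite /P22 trmx_drsub sP.
have s12 : (P12 P)^T = P21 P by rewrite /P12 trmx_ursub sP.
by rewrite -s12 P12_shift trmx_mul s22 linearN /= trmxK mulmxN mulNmx.
Qed.

Lemma quad_complete_square k (X : 'M[R]_(q, k)) (Y : 'M[R]_(r, k)) :
  (col_mx X Y)^T *m P *m col_mx X Y =
  X^T *m pi_rest *m X +
  (Y - pi_shift *m X)^T *m P22 P *m (Y - pi_shift *m X).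
Proof.
rewrite -{1}(submxK P) -[ursubmx P]/(P12 P) -[dlsubmx P]/(P21 P).
by rewrite P12_shift P21_shift quad_block_mx_square.
Qed.

Lemma quad_Zplus (Z : 'M[R]_(r, q)) :
  (col_mx 1%:M Z)^T *m P *m col_mx 1%:M Z =
  pi_rest + (Z - pi_shift)^T *m P22 P *m (Z - pi_shift).
Proof. by rewrite quad_complete_square trmx1 mul1mx !mulmx1. Qed.

End CompletingTheSquare.
End BlockForms.

Unset Implicit Arguments. Set Strict Implicit.

Theorem mainTheorem4 (R : realType) (q r p : nat)
  (P : 'M[R]_(q + r)) (W : 'M[R]_(q, p)) :
  PiSet P ->
  \rank W = p ->
  (exists Z : 'M[R]_(r, q), Zplus P Z) ->
  forall Z' : 'M[R]_(r, p),
    Zplus (PiW P W) Z' <-> exists2 Z : 'M[R]_(r, q), Zplus P Z & Z' = Z *m W.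
Proof.
case=> sP nN _ kerP rW [Z0 pdZ0] Z'.
set K := pi_shift P.
have pdS : pd (pi_rest P).
  by apply: (pd_nsdD (nsd_congr (Z0 - K) nN)); rewrite -quad_Zplus.
rewrite /Zplus PiW_quad; split.
- rewrite quad_complete_square // => /(pd_nsd_extend pdS nN) [E EW pdE].
  exists (K + E); last by rewrite mulmxDl EW addrC subrK.
  by rewrite /Zplus quad_Zplus // [K + E]addrC addrK.
- case=> Z pdZ ->.
  rewrite -[W in col_mx W _]mul1mx -mul_col_mx trmx_mul !mulmxA.
  rewrite -(mulmxA W^T) -(mulmxA W^T).
  exact: pd_congr pdZ (full_col_rank_inj rW).
Qed.
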